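(* There exist a Banach algebra $A$ which is not nilpotent and a Banach $A$-bimodule $X$ such that $Mul_{2}(A,X)\subsetneq Mul_{3}(A,X)$.
   Context: A Banach algebra $A$ is nilpotent if there is $n\ge 2$ with $a_1a_2\cdots a_n=0$ for all $a_1,\dots,a_n\in A$. For $n\ge 2$, a bounded linear map $T:A\to X$ into a Banach $A$-bimodule is an $n$-multiplier if $T(a_1\cdots a_n)=a_1\cdot T(a_2\cdots a_n)=T(a_1\cdots a_{n-1})\cdot a_n$ for all $a_i\in A$; $Mul_n(A,X)$ is the set of all $n$-multipliers. *)

From Stdlib Require Import Reals.
Open Scope R_scope.

Definition C : Type := (R * R)%type.
Definition C0 : C := (0, 0).
Definition C1 : C := (1, 0).
Definition Cadd (z w : C) : C := (fst z + fst w, snd z + snd w).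
Definition Cmul (z w : C) : C :=
  (fst z * fst w - snd z * snd w, fst z * snd w + snd z * fst w).
Definition Cnorm (z : C) : R := sqrt (fst z * fst z + snd z * snd z).

Record BanachSpace := {
  bs_car :> Type;
  vadd : bs_car -> bs_car -> bs_car;
  vzero : bs_car;
  vopp : bs_car -> bs_car;
  vscal : C -> bs_car -> bs_car;
  vnorm : bs_car -> R;
  vadd_assoc : forall x y z, vadd x (vadd y z) = vadd (vadd x y) z;
  vadd_comm : forall x y, vadd x y = vadd y x;
  vadd_zero : forall x, vadd x vzero = x;
  vadd_opp : forall x, vadd x (vopp x) = vzero;
  vscal_one : forall x, vscal C1 x = x;
  vscal_assoc : forall c d x, vscal c (vscal d x) = vscal (Cmul c d) x;
  vscal_distr_v : forall c x y, vscal c (vadd x y) = vadd (vscal c x) (vscal c y);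
  vscal_distr_c : forall c d x, vscal (Cadd c d) x = vadd (vscal c x) (vscal d x);
  vnorm_nonneg : forall x, 0 <= vnorm x;
  vnorm_eq0 : forall x, vnorm x = 0 -> x = vzero;
  vnorm_triangle : forall x y, vnorm (vadd x y) <= vnorm x + vnorm y;
  vnorm_scal : forall c x, vnorm (vscal c x) = Cnorm c * vnorm x;
  vcomplete : forall u : nat -> bs_car,
    (forall eps, 0 < eps -> exists N, forall m n, (N <= m)%nat -> (N <= n)%nat ->
        vnorm (vadd (u m) (vopp (u n))) < eps) ->
    exists l, forall eps, 0 < eps -> exists N, forall n, (N <= n)%nat ->
        vnorm (vadd (u n) (vopp l)) < eps
}.

Arguments vadd {_}. Arguments vzero {_}. Arguments vopp {_}.
Arguments vscal {_}. Arguments vnorm {_}.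

Record BanachAlgebra := {
  ba_sp :> BanachSpace;
  amul : ba_sp -> ba_sp -> ba_sp;
  amul_assoc : forall a b c, amul a (amul b c) = amul (amul a b) c;
  amul_addl : forall a b c, amul (vadd a b) c = vadd (amul a c) (amul b c);
  amul_addr : forall a b c, amul a (vadd b c) = vadd (amul a b) (amul a c);
  amul_scall : forall k a b, amul (vscal k a) b = vscal k (amul a b);
  amul_scalr : forall k a b, amul a (vscal k b) = vscal k (amul a b);
  amul_norm : forall a b, vnorm (amul a b) <= vnorm a * vnorm b
}.

Arguments amul {_}.

Record BanachBimodule (A : BanachAlgebra) := {
  bm_sp :> BanachSpace;
  lact : A -> bm_sp -> bm_sp;
  ract : bm_sp -> A -> bm_sp;
  lact_addl : forall a b x, lact (vadd a b) x = vadd (lact a x) (lact b x);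
  lact_addr : forall a x y, lact a (vadd x y) = vadd (lact a x) (lact a y);
  lact_scall : forall k a x, lact (vscal k a) x = vscal k (lact a x);
  lact_scalr : forall k a x, lact a (vscal k x) = vscal k (lact a x);
  ract_addl : forall x y a, ract (vadd x y) a = vadd (ract x a) (ract y a);
  ract_addr : forall x a b, ract x (vadd a b) = vadd (ract x a) (ract x b);
  ract_scall : forall k x a, ract (vscal k x) a = vscal k (ract x a);
  ract_scalr : forall k x a, ract x (vscal k a) = vscal k (ract x a);
  lact_assoc : forall a b x, lact a (lact b x) = lact (amul a b) x;
  ract_assoc : forall x a b, ract (ract x a) b = ract x (amul a b);
  lract_assoc : forall a x b, ract (lact a x) b = lact a (ract x b);
  lact_norm : forall a x, vnorm (lact a x) <= vnorm a * vnorm x;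
  ract_norm : forall x a, vnorm (ract x a) <= vnorm x * vnorm a
}.

Arguments lact {_ _}. Arguments ract {_ _}.

Definition bounded_linear {V W : BanachSpace} (T : V -> W) : Prop :=
  (forall x y, T (vadd x y) = vadd (T x) (T y)) /\
  (forall c x, T (vscal c x) = vscal c (T x)) /\
  (exists M, forall x, vnorm (T x) <= M * vnorm x).

(** [aprod a i k] = a_i a_(i+1) ... a_(i+k)  (k+1 factors). *)
Fixpoint aprod {A : BanachAlgebra} (a : nat -> A) (i k : nat) : A :=
  match k with
  | O => a i
  | S k' => amul (aprod a i k') (a (i + S k')%nat)
  end.

(** Nilpotent: some n >= 2 with a_1 ... a_n = 0 for all a_1..a_n
    (here indexed a_0 ... a_(n-1)). *)
Definition nilpotent (A : BanachAlgebra) : Prop :=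
  exists n : nat, (2 <= n)%nat /\
    forall a : nat -> A, aprod a 0 (n - 1) = vzero.

(** n-multipliers, n >= 2: with a_1..a_n indexed as a 0 .. a (n-1),
    T(a_1...a_n) = a_1 . T(a_2...a_n) = T(a_1...a_(n-1)) . a_n. *)
Definition is_n_multiplier {A : BanachAlgebra} {X : BanachBimodule A}
  (n : nat) (T : A -> X) : Prop :=
  bounded_linear T /\
  forall a : nat -> A,
    T (aprod a 0 (n - 1)) = lact (a 0%nat) (T (aprod a 1 (n - 2))) /\
    T (aprod a 0 (n - 1)) = ract (T (aprod a 0 (n - 2))) (a (n - 1)%nat).

Definition Mul (n : nat) (A : BanachAlgebra) (X : BanachBimodule A) : (A -> X) -> Prop :=
  fun T => is_n_multiplier n T.

(* Take A = C x N, where N = u C[u] / (u^3).  The unit (1, 0) is a nonzero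
   idempotent, so A is not nilpotent, while N^3 = 0.  Over the zero bimodule X = C,
   an n-multiplier is just a bounded linear map killing all n-fold products.  The
   coefficient of u^2 in the N-component kills all triple products but not
   u * u = u^2, so it lies in Mul_3 but not in Mul_2.  Conversely Mul_2 is contained
   in Mul_3 for every A and X, by associativity. *)

From Pilot Require Import Defs.
From Stdlib Require Import Reals Lra Psatz.
From Coquelicot Require Complex.

Open Scope R_scope.

Section BanachSpaceFacts.
Variable V : BanachSpace.

Lemma vscal_zero (c : Defs.C) : vscal c (@vzero V) = vzero.
Proof.
  assert (Hdup : vscal c (@vzero V) = vadd (vscal c vzero) (vscal c vzero)).
  { rewrite <- vscal_distr_v, vadd_zero. reflexivity. }
  rewrite <- (vadd_opp V (vscal c vzero)) at 2.
  rewrite Hdup at 2. rewrite <- vadd_assoc, vadd_opp, vadd_zero. reflexivity.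
Qed.

Lemma vnorm_zero : vnorm (@vzero V) = 0.
Proof.
  rewrite <- (vscal_zero Defs.C0), vnorm_scal. unfold Cnorm. simpl.
  rewrite Rmult_0_l, Rplus_0_l, sqrt_0. apply Rmult_0_l.
Qed.

End BanachSpaceFacts.

Lemma bounded_linear_comp {U V W : BanachSpace} (S : U -> V) (T : V -> W) :
  bounded_linear S -> bounded_linear T -> bounded_linear (fun x => T (S x)).
Proof.
  intros [S_add [S_scal [MS HMS]]] [T_add [T_scal [MT HMT]]].
  split; [intros; rewrite S_add, T_add; reflexivity|].
  split; [intros; rewrite S_scal, T_scal; reflexivity|].
  exists (Rmax MT 0 * MS). intros x.
  pose proof (vnorm_nonneg V (S x)). pose proof (Rmax_r MT 0).
  apply (Rle_trans _ (Rmax MT 0 * vnorm (S x))).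
  - apply (Rle_trans _ (MT * vnorm (S x))); [apply HMT|].
    apply Rmult_le_compat_r; [lra|apply Rmax_l].
  - rewrite Rmult_assoc. apply Rmult_le_compat_l; [lra|apply HMS].
Qed.

Lemma Cnorm_Cmod (z : Defs.C) : Cnorm z = Complex.Cmod z.
Proof. unfold Cnorm, Complex.Cmod. f_equal. simpl. ring. Qed.

Lemma Cnorm_mul (z w : Defs.C) : Cnorm (Cmul z w) = Cnorm z * Cnorm w.
Proof. rewrite !Cnorm_Cmod. apply Complex.Cmod_mult. Qed.

Lemma Cnorm_triangle (z w : Defs.C) : Cnorm (Cadd z w) <= Cnorm z + Cnorm w.
Proof. rewrite !Cnorm_Cmod. apply Complex.Cmod_triangle. Qed.

Lemma Cnorm_ge0 (z : Defs.C) : 0 <= Cnorm z.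
Proof. apply sqrt_pos. Qed.

Lemma Cnorm_eq0 (z : Defs.C) : Cnorm z = 0 -> z = Defs.C0.
Proof.
  unfold Cnorm; destruct z as [a b]; simpl; intro H.
  apply sqrt_eq_0 in H; [|nra].
  assert (a = 0) by nra. assert (b = 0) by nra. subst; reflexivity.
Qed.

Lemma Rabs_fst_le_Cnorm (z : Defs.C) : Rabs (fst z) <= Cnorm z.
Proof. unfold Cnorm. rewrite <- sqrt_Rsqr_abs. apply sqrt_le_1_alt. unfold Rsqr. nra. Qed.

Lemma Rabs_snd_le_Cnorm (z : Defs.C) : Rabs (snd z) <= Cnorm z.
Proof. unfold Cnorm. rewrite <- sqrt_Rsqr_abs. apply sqrt_le_1_alt. unfold Rsqr. nra. Qed.

Lemma Cnorm_le_Rabs (z : Defs.C) : Cnorm z <= Rabs (fst z) + Rabs (snd z).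
Proof.
  unfold Cnorm. pose proof (Rabs_pos (fst z)). pose proof (Rabs_pos (snd z)).
  rewrite <- (sqrt_Rsqr (Rabs (fst z) + Rabs (snd z))) by lra.
  apply sqrt_le_1_alt.
  change (fst z * fst z + snd z * snd z) with ((fst z)² + (snd z)²).
  rewrite (Rsqr_abs (fst z)), (Rsqr_abs (snd z)). unfold Rsqr. nra.
Qed.

Definition Copp (z : Defs.C) : Defs.C := (- fst z, - snd z).

Lemma C_complete (u : nat -> Defs.C) :
    (forall eps, 0 < eps -> exists N, forall m n, (N <= m)%nat -> (N <= n)%nat ->
        Cnorm (Cadd (u m) (Copp (u n))) < eps) ->
    exists l, forall eps, 0 < eps -> exists N, forall n, (N <= n)%nat ->
        Cnorm (Cadd (u n) (Copp l)) < eps.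
Proof.
  intros Hu.
  assert (Hre : Cauchy_crit (fun n => fst (u n))).
  { intros eps Heps. destruct (Hu eps Heps) as [N HN]. exists N. intros n m Hn Hm.
    eapply Rle_lt_trans; [|apply (HN n m Hn Hm)].
    eapply Rle_trans; [|apply Rabs_fst_le_Cnorm]. apply Req_le. reflexivity. }
  assert (Him : Cauchy_crit (fun n => snd (u n))).
  { intros eps Heps. destruct (Hu eps Heps) as [N HN]. exists N. intros n m Hn Hm.
    eapply Rle_lt_trans; [|apply (HN n m Hn Hm)].
    eapply Rle_trans; [|apply Rabs_snd_le_Cnorm]. apply Req_le. reflexivity. }
  destruct (R_complete _ Hre) as [l1 Hl1]. destruct (R_complete _ Him) as [l2 Hl2].
  exists (l1, l2). intros eps Heps.
  destruct (Hl1 (eps/2)) as [N1 HN1]; [lra|].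
  destruct (Hl2 (eps/2)) as [N2 HN2]; [lra|].
  exists (Nat.max N1 N2). intros n Hn.
  eapply Rle_lt_trans; [apply Cnorm_le_Rabs|]. simpl.
  specialize (HN1 n ltac:(lia)). specialize (HN2 n ltac:(lia)).
  unfold Rdist, Rminus in *. lra.
Qed.

Ltac C_ring := intros; repeat match goal with
  | x : ?T |- _ => let T' := eval hnf in T in
      match T' with prod _ _ => destruct x end
  end; unfold Cadd, Cmul, Copp, Defs.C0, Defs.C1 in *; simpl;
  repeat (apply injective_projections; simpl); ring.

Definition CB : BanachSpace.
Proof.
  refine {| bs_car := Defs.C; vadd := Cadd; vzero := Defs.C0; vopp := Copp; vscal := Cmul;
            vnorm := Cnorm |}.
  all: try C_ring.
  - apply Cnorm_ge0.
  - apply Cnorm_eq0.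
  - apply Cnorm_triangle.
  - apply Cnorm_mul.
  - apply C_complete.
Defined.

Definition CA : BanachAlgebra.
Proof.
  refine {| ba_sp := CB; amul := Cmul |}; try C_ring.
  intros a b. apply Req_le, Cnorm_mul.
Defined.

Section ProductSpace.
Variables V W : BanachSpace.

Lemma prod_complete (u : nat -> (V * W)%type) :
  (forall eps, 0 < eps -> exists N, forall m n, (N <= m)%nat -> (N <= n)%nat ->
      vnorm (vadd (fst (u m)) (vopp (fst (u n))))
      + vnorm (vadd (snd (u m)) (vopp (snd (u n)))) < eps) ->
  exists l : (V * W)%type, forall eps, 0 < eps -> exists N, forall n, (N <= n)%nat ->
      vnorm (vadd (fst (u n)) (vopp (fst l)))
      + vnorm (vadd (snd (u n)) (vopp (snd l))) < eps.
Proof.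
  intros Hu.
  destruct (vcomplete V (fun n => fst (u n))) as [l1 Hl1].
  { intros eps Heps. destruct (Hu eps Heps) as [N HN]. exists N. intros m n Hm Hn.
    specialize (HN m n Hm Hn).
    pose proof (vnorm_nonneg W (vadd (snd (u m)) (vopp (snd (u n))))). lra. }
  destruct (vcomplete W (fun n => snd (u n))) as [l2 Hl2].
  { intros eps Heps. destruct (Hu eps Heps) as [N HN]. exists N. intros m n Hm Hn.
    specialize (HN m n Hm Hn).
    pose proof (vnorm_nonneg V (vadd (fst (u m)) (vopp (fst (u n))))). lra. }
  exists (l1, l2). intros eps Heps.
  destruct (Hl1 (eps/2)) as [N1 HN1]; [lra|].
  destruct (Hl2 (eps/2)) as [N2 HN2]; [lra|].
  exists (Nat.max N1 N2). intros n Hn.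
  specialize (HN1 n ltac:(lia)). specialize (HN2 n ltac:(lia)). simpl. lra.
Qed.

Definition prodB : BanachSpace.
Proof.
  refine {| bs_car := (V * W)%type;
            vadd := fun x y => (vadd (fst x) (fst y), vadd (snd x) (snd y));
            vzero := (vzero, vzero);
            vopp := fun x => (vopp (fst x), vopp (snd x));
            vscal := fun c x => (vscal c (fst x), vscal c (snd x));
            vnorm := fun x => vnorm (fst x) + vnorm (snd x) |}.
  - intros; simpl; f_equal; apply vadd_assoc.
  - intros; simpl; f_equal; apply vadd_comm.
  - intros [a b]; simpl; f_equal; apply vadd_zero.
  - intros; simpl; f_equal; apply vadd_opp.
  - intros [a b]; simpl; f_equal; apply vscal_one.
  - intros; simpl; f_equal; apply vscal_assoc.
  - intros; simpl; f_equal; apply vscal_distr_v.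
  - intros; simpl; f_equal; apply vscal_distr_c.
  - intros; pose proof (vnorm_nonneg V (fst x)); pose proof (vnorm_nonneg W (snd x)); lra.
  - intros [a b] Hn; simpl in *.
    pose proof (vnorm_nonneg V a); pose proof (vnorm_nonneg W b).
    f_equal; apply vnorm_eq0; lra.
  - intros; simpl. pose proof (vnorm_triangle V (fst x) (fst y)).
    pose proof (vnorm_triangle W (snd x) (snd y)). lra.
  - intros; simpl. rewrite !vnorm_scal. ring.
  - apply prod_complete.
Defined.

Lemma bounded_linear_snd : bounded_linear (snd : prodB -> W).
Proof.
  split; [reflexivity|]. split; [reflexivity|].
  exists 1. intros [v w]. simpl. pose proof (vnorm_nonneg V v). lra.
Qed.

End ProductSpace.

Section ProductAlgebra.
Variables A B : BanachAlgebra.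

Lemma prod_amul_norm (a1 b1 : A) (a2 b2 : B) :
  vnorm (amul a1 b1) + vnorm (amul a2 b2)
  <= (vnorm a1 + vnorm a2) * (vnorm b1 + vnorm b2).
Proof.
  pose proof (amul_norm A a1 b1). pose proof (amul_norm B a2 b2).
  pose proof (vnorm_nonneg A a1). pose proof (vnorm_nonneg A b1).
  pose proof (vnorm_nonneg B a2). pose proof (vnorm_nonneg B b2). nra.
Qed.

Definition prodBA : BanachAlgebra.
Proof.
  refine {| ba_sp := prodB A B;
            amul := fun x y => (amul (fst x) (fst y), amul (snd x) (snd y)) |}.
  - intros; simpl; f_equal; apply amul_assoc.
  - intros; simpl; f_equal; apply amul_addl.
  - intros; simpl; f_equal; apply amul_addr.
  - intros; simpl; f_equal; apply amul_scall.
  - intros; simpl; f_equal; apply amul_scalr.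
  - intros [a1 a2] [b1 b2]. apply prod_amul_norm.
Defined.

End ProductAlgebra.

(* [(x, y)] encodes [x u + y u^2], so [(x, y) (x', y') = x x' u^2]. *)
Definition nil3_mul (a b : prodB CB CB) : prodB CB CB := (Defs.C0, Cmul (fst a) (fst b)).

Definition Nil3 : BanachAlgebra.
Proof.
  refine {| ba_sp := prodB CB CB; amul := nil3_mul |}.
  all: try (unfold nil3_mul; simpl; C_ring).
  intros [x y] [x' y'].
  change (Cnorm Defs.C0 + Cnorm (Cmul x x') <= (Cnorm x + Cnorm y) * (Cnorm x' + Cnorm y')).
  rewrite Cnorm_mul. replace (Cnorm Defs.C0) with 0
    by (symmetry; apply (vnorm_zero CB)).
  pose proof (Cnorm_ge0 x); pose proof (Cnorm_ge0 y);
  pose proof (Cnorm_ge0 x'); pose proof (Cnorm_ge0 y'). nra.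
Defined.

Lemma Nil3_mul3 (a b c : Nil3) : amul (amul a b) c = vzero.
Proof. simpl; unfold nil3_mul; simpl. C_ring. Qed.

Definition Nil3_u : Nil3 := (Defs.C1, Defs.C0).

Lemma Nil3_u_sqr : amul Nil3_u Nil3_u = (Defs.C0, Defs.C1) :> Nil3.
Proof. simpl; unfold nil3_mul; simpl. C_ring. Qed.

Lemma aprod_const_idempotent (A : BanachAlgebra) (e : A) (k : nat) :
  amul e e = e -> aprod (fun _ => e) 0 k = e.
Proof. intros He. induction k as [|k IHk]; [reflexivity|]. simpl. rewrite IHk. exact He. Qed.

Lemma idempotent_not_nilpotent (A : BanachAlgebra) (e : A) :
  amul e e = e -> e <> vzero -> ~ nilpotent A.
Proof.
  intros He Hne [n [_ Hn]]. apply Hne.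
  rewrite <- (aprod_const_idempotent A e (n - 1) He). apply Hn.
Qed.

Lemma Mul2_sub_Mul3 (A : BanachAlgebra) (X : BanachBimodule A) (T : A -> X) :
  Mul 2 A X T -> Mul 3 A X T.
Proof.
  intros [Hbl HT]. split; [exact Hbl|]. intros a. simpl. split.
  - destruct (HT (fun i => match i with 0%nat => a 0%nat | _ => amul (a 1%nat) (a 2%nat) end))
      as [Hl _].
    simpl in Hl. rewrite <- amul_assoc. exact Hl.
  - destruct (HT (fun i => match i with 0%nat => amul (a 0%nat) (a 1%nat) | _ => a 2%nat end))
      as [_ Hr].
    exact Hr.
Qed.

Section ZeroBimodule.
Variables (A : BanachAlgebra) (V : BanachSpace).

Definition zero_bimodule : BanachBimodule A.
Proof.
  refine {| bm_sp := V; lact := fun _ _ => vzero; ract := fun _ _ => vzero |}.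
  all: try (intros; first [apply eq_sym, vadd_zero | apply eq_sym, vscal_zero | reflexivity]).
  all: intros u v; rewrite vnorm_zero; apply Rmult_le_pos; apply vnorm_nonneg.
Defined.

Lemma zero_bimodule_multiplier (n : nat) (T : A -> zero_bimodule) :
  is_n_multiplier n T <->
  bounded_linear T /\ forall a : nat -> A, T (aprod a 0 (n - 1)) = vzero.
Proof.
  split.
  - intros [Hbl HT]. split; [exact Hbl|]. intros a. apply (HT a).
  - intros [Hbl HT]. split; [exact Hbl|]. intros a. split; apply HT.
Qed.

End ZeroBimodule.

Definition Aex : BanachAlgebra := prodBA CA Nil3.

Definition Xex : BanachBimodule Aex := zero_bimodule Aex CB.

Definition Aex_unit : Aex := (Defs.C1, vzero).

Lemma Aex_unit_idempotent : amul Aex_unit Aex_unit = Aex_unit.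
Proof. simpl; unfold nil3_mul; simpl. C_ring. Qed.

Definition Tex (a : Aex) : Xex := snd (snd a).

Lemma Tex_Mul3 : Mul 3 Aex Xex Tex.
Proof.
  apply zero_bimodule_multiplier. split.
  - apply (bounded_linear_comp (snd : Aex -> Nil3) (snd : Nil3 -> CB));
      apply bounded_linear_snd.
  - intros a. simpl. unfold Tex. rewrite (Nil3_mul3 (snd (a 0%nat))). reflexivity.
Qed.

Lemma Tex_not_Mul2 : ~ Mul 2 Aex Xex Tex.
Proof.
  intros H. apply zero_bimodule_multiplier in H. destruct H as [_ H].
  specialize (H (fun _ => (Defs.C0, Nil3_u))).
  change (snd (amul Nil3_u Nil3_u) = Defs.C0) in H.
  rewrite Nil3_u_sqr in H. injection H as H1. lra.
Qed.

Theorem theorem2p6 :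
  exists (A : BanachAlgebra) (X : BanachBimodule A),
    ~ nilpotent A /\
    (forall T : A -> X, Mul 2 A X T -> Mul 3 A X T) /\
    (exists T : A -> X, Mul 3 A X T /\ ~ Mul 2 A X T).
Proof.
  exists Aex, Xex. split; [|split].
  - apply (idempotent_not_nilpotent Aex Aex_unit).
    + apply Aex_unit_idempotent.
    + intros H. injection H as H1. lra.
  - apply Mul2_sub_Mul3.
  - exists Tex. split; [apply Tex_Mul3|apply Tex_not_Mul2].
Qed.
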